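(* In the mechanism $\mathbb{M}_{\text{1-supply}}$ on a unit-supply two-sided market, if every seller $j\in L$ receives and accepts an offer (i.e. puts her item into the market) with probability exactly $1/2$, then $$2\,\mathrm{ALG}^S\ \ge\ \sum_{j=1}^k\mathbb{E}[w_j]\ \ge\ \mathrm{OPT}^S.$$
   Context: Unit-supply two-sided market: buyers $[n]$, sellers $[k]$, seller $j$ owns only item $j$. Buyer valuations $v_i$ are monotone normalized XOS functions on $2^{[k]}$ drawn independently from public distributions $G_i$; seller values $w_j\ge0$ drawn independently from public distributions $F_j$. For XOS $v$ and $T\subseteq[k]$, $a(v,T,\cdot)$ is a fixed additive function with $a(v,T,T)=v(T)$, $a(v,T,S)\le v(S)$. $\mathbb{A}$ maps buyer profiles $\mathbf v$ to allocations $X^{\mathbb A}(\mathbf v)$ of items to buyers. $\mathrm{SW}^B_j(\mathbf v)=a(v_i,X^{\mathbb A}_i(\mathbf v),\{j\})$ if $j\in X^{\mathbb A}_i(\mathbf v)$, else $0$. $L=\{j:\mathbb{E}[\mathrm{SW}^B_j(\mathbf v)]\ge4\mathbb{E}[w_j]\}$, $p_j=\frac12\mathbb{E}[\mathrm{SW}^B_j(\mathbf v)]$ for $j\in L$. $\mathbb{M}_{\text{1-supply}}$: for each $j\in L$, with probability $q_j=1/(2\Pr[w_j\le p_j])$ offer seller $j$ payment $p_j$; she accepts iff $w_j\le p_j$; $\Lambda_1$ = accepted items. Then buyers $i=1,\dots,n$ in turn pick a utility-maximizing bundle $B_i\subseteq\Lambda_i$ at prices $p_j$, pay $\sum_{j\in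 B_i}p_j$, and $\Lambda_{i+1}=\Lambda_i\setminus B_i$; sellers of bought items receive $p_j$; unbought items stay with their sellers. $\mathrm{ALG}^S=\mathbb{E}[\sum_j w_j\mathbb{I}(\text{item } j\text{ stays with seller }j)]$ in the mechanism's outcome. $\mathrm{OPT}^S$ is the expected sellers' part $\sum_j w_j\mathbb{I}(j\text{ unallocated to buyers})$ of the welfare of a welfare-maximizing allocation (chosen for each valuation profile). *)

From HB Require Import structures.
From mathcomp Require Import all_boot all_order all_algebra.
From mathcomp Require Import all_classical all_reals all_analysis.
Set Implicit Arguments. Unset Strict Implicit. Unset Printing Implicit Defensive.
Import Order.TTheory GRing.Theory Num.Theory.
Local Open Scope ring_scope.

Section Market.
Variable R : realType.

Definition valuation (k : nat) := {set 'I_k} -> R.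

Definition addfun (k : nat) (alpha : 'I_k -> R) (S : {set 'I_k}) : R :=
  \sum_(j in S) alpha j.

Definition monotone_val (k : nat) (v : valuation k) :=
  forall S T : {set 'I_k}, S \subset T -> v S <= v T.

Definition normalized_val (k : nat) (v : valuation k) := v finset.set0 = 0.

Definition XOS (k : nat) (v : valuation k) :=
  exists (m : nat) (alpha : 'I_m.+1 -> 'I_k -> R),
    (forall l j, 0 <= alpha l j) /\
    (forall l S, addfun (alpha l) S <= v S) /\
    (forall S, exists l, v S = addfun (alpha l) S).

(* allocations of items to buyers: item j goes to buyer i (Some i) or to nobody *)
Definition alloc (n k : nat) := 'I_k -> option 'I_n.

Definition bundle (n k : nat) (X : alloc n k) (i : 'I_n) : {set 'I_k} :=
  [set j | X j == Some i].

Definition SWB (n k : nat) (a : valuation k -> {set 'I_k} -> 'I_k -> R)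
  (A : ('I_n -> valuation k) -> alloc n k) (vs : 'I_n -> valuation k) (j : 'I_k) : R :=
  match A vs j with
  | Some i => addfun (a (vs i) (bundle (A vs) i)) [set j]
  | None => 0
  end.

Definition welfare (n k : nat) (vs : 'I_n -> valuation k) (ws : 'I_k -> R)
  (X : alloc n k) : R :=
  \sum_(i < n) vs i (bundle X i) + \sum_(j < k) ws j * (X j == None)%:R.

Section Prob.
Local Open Scope classical_set_scope.
Context (d : measure_display) (Omega : measurableType d) (P : probability Omega R).

(* mutual independence of a finite family of event collections:
   product rule for every choice of one event per collection
   (each collection contains setT, so this covers all subfamilies) *)
Definition mutually_independent (I : finType) (E : I -> set (set Omega)) :=
  forall Aev : I -> set Omega, (forall t, E t (Aev t)) ->
    P (\bigcap_(t in [set: I]) Aev t) = (\prod_(t : I) fine (P (Aev t)))%:E.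

Definition events_rv (X : Omega -> R) : set (set Omega) :=
  [set Aev | exists B : set R, measurable B /\ Aev = X @^-1` B].

Definition events_val (k : nat) (V : Omega -> valuation k) : set (set Omega) :=
  [set Aev | exists B : {set 'I_k} -> set R, (forall S, measurable (B S)) /\
     Aev = [set om | forall S, B S (V om S)]].

Definition events_bool (o : Omega -> bool) : set (set Omega) :=
  [set Aev | exists B : set bool, Aev = o @^-1` B].

Definition Exp (f : Omega -> R) : \bar R := (\int[P]_om (f om)%:E)%E.

Definition Prob (Aev : set Omega) : R := fine (P Aev).

End Prob.

Section Mech.
Variables (n k : nat).

Definition Lambda1 (L : {set 'I_k}) (p : 'I_k -> R) (offered : 'I_k -> bool)
  (ws : 'I_k -> R) : {set 'I_k} :=
  [set j | [&& j \in L, offered j & ws j <= p j]].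

Definition remaining (pick : 'I_n -> {set 'I_k} -> {set 'I_k})
  (Lam1 : {set 'I_k}) : {set 'I_k} :=
  foldl (fun Lam i => Lam :\: pick i Lam) Lam1 (enum 'I_n).

Definition stays (pick : 'I_n -> {set 'I_k} -> {set 'I_k})
  (Lam1 : {set 'I_k}) (j : 'I_k) : bool :=
  (j \notin Lam1) || (j \in remaining pick Lam1).

Definition utility (v : valuation k) (p : 'I_k -> R) (B : {set 'I_k}) : R :=
  v B - \sum_(j in B) p j.

Definition utility_maximizing (v : valuation k) (p : 'I_k -> R)
  (Lam B : {set 'I_k}) :=
  B \subset Lam /\ forall B' : {set 'I_k}, B' \subset Lam -> utility v p B' <= utility v p B.

End Mech.

End Market.

From HB Require Import structures.
From mathcomp Require Import all_boot all_order all_algebra.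
From mathcomp Require Import all_classical all_reals all_analysis.
From mathcomp Require Import lra.
Import Order.TTheory GRing.Theory Num.Theory.
Local Open Scope ring_scope.
Local Open Scope classical_set_scope.

(* Item j stays with its seller at least when it never enters the market, so it
   suffices to show E[w_j] <= 2 E[w_j 1{j does not enter}] for every j; the bound
   OPT^S <= sum_j E[w_j] is pointwise.  For
   j in L the item enters exactly on C = {offered} /\ {w_j <= p_j}, and
   P(offered) P(w_j <= p_j) = 1/2 by independence.  For r >= 0 the events
   {w_j <= p_j} and {w_j > r} are negatively correlated (either they cover the
   sample space or they are disjoint), hence P(w_j > r, C) <= P(w_j > r) / 2: the
   tail of w_j 1{not C} is at least half the tail of w_j, and integrating the
   tails gives the claim. *)

Lemma measurable_preimage {d d'} {T : measurableType d} {U : measurableType d'}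
  {f : T -> U} : measurable_fun setT f ->
  forall Y : set U, measurable Y -> measurable (f @^-1` Y).
Proof. by move=> mf Y mY; rewrite -[f @^-1` Y]setTI; exact: mf. Qed.

Section nonmeasurable_integral.
Context {d} {T : measurableType d} {R : realType} (mu : {measure set T -> \bar R}).

(* Nothing makes the integrands of ALG^S and OPT^S measurable: they involve the
   buyers' choices and the optimal allocation. *)
Lemma ge0_le_integral_nomeas (f g : T -> \bar R) :
  (forall x, (0 <= f x)%E) -> (forall x, (f x <= g x)%E) ->
  (\int[mu]_x f x <= \int[mu]_x g x)%E.
Proof.
move=> f0 fg; have g0 x : (0 <= g x)%E by apply: le_trans (f0 x) (fg x).
rewrite !ge0_integralTE //; apply: ereal_sup_le => _ [h hf <-].
by exists h => // x; apply: le_trans (hf x) (fg x).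
Qed.

End nonmeasurable_integral.

Section probability_lemmas.
Context {d} {T : measurableType d} {R : realType} (P : probability T R).

Lemma ProbE (A : set T) : measurable A -> P A = (Prob P A)%:E.
Proof. by move=> mA; rewrite fineK // fin_num_measure. Qed.

Lemma Prob_ge0 (A : set T) : 0 <= Prob P A.
Proof. exact/fine_ge0/measure_ge0. Qed.

Lemma Prob_le1 {A : set T} : measurable A -> Prob P A <= 1.
Proof. by move=> mA; rewrite -lee_fin -ProbE // probability_le1. Qed.

Lemma ProbD (A B : set T) : measurable A -> measurable B ->
  Prob P (A `\` B) = Prob P A - Prob P (A `&` B).
Proof.
move=> mA mB; have mAB : measurable (A `&` B) by exact: measurableI.
have mAdB : measurable (A `\` B) by exact: measurableD.
apply: EFin_inj; rewrite EFinB -!ProbE //.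
by rewrite measureD // ltey_eq fin_num_measure.
Qed.

Lemma Prob_setI_le_mul (A B : set T) : measurable A -> measurable B ->
  A `|` B = setT -> Prob P (A `&` B) <= Prob P A * Prob P B.
Proof.
move=> mA mB AB; have : Prob P A + Prob P B - Prob P (A `&` B) = 1.
  have mAB : measurable (A `&` B) by exact: measurableI.
  apply: EFin_inj; rewrite EFinB EFinD -!ProbE //.
  by rewrite -measureUfinl ?ltey_eq ?fin_num_measure // AB; exact: probability_setT.
have := Prob_le1 mA; have := Prob_le1 mB; nra.
Qed.

Lemma Prob_itv_le_mul (W : T -> R) (r p : R) : measurable_fun setT W ->
  Prob P (W @^-1` `]r, p]) <= Prob P (W @^-1` `]-oo, p]) * Prob P (W @^-1` `]r, +oo[).
Proof.
move=> mW; have mpre := measurable_preimage mW.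
have -> : W @^-1` `]r, p] = W @^-1` `]-oo, p] `&` W @^-1` `]r, +oo[.
  apply/seteqP; split => x /=; rewrite !in_itv /= andbT; first by case/andP=> -> ->.
  by case=> -> ->.
have [rp|pr] := ltP r p.
  apply: Prob_setI_le_mul; [exact: mpre (measurable_itv _).. |].
  apply/seteqP; split => // x _ /=; rewrite !in_itv /= andbT.
  by case: (leP (W x) p) => [|/(lt_trans rp)]; [left | right].
have -> : W @^-1` `]-oo, p] `&` W @^-1` `]r, +oo[ = set0.
  apply/seteqP; split => // x /=; rewrite !in_itv /= andbT => -[Wp rW].
  by have := lt_le_trans rW (le_trans Wp pr); rewrite ltxx.
by rewrite /Prob measure0; apply: mulr_ge0; apply: Prob_ge0.
Qed.

Lemma ge0_le_integral_ccdf (f g : T -> R) (c : R) :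
  measurable_fun setT f -> measurable_fun setT g ->
  (forall x, 0 <= f x) -> (forall x, 0 <= g x) -> 0 <= c ->
  (forall r, 0 <= r -> (P (f @^-1` `]r, +oo[) <= c%:E * P (g @^-1` `]r, +oo[))%E) ->
  (\int[P]_x (f x)%:E <= c%:E * \int[P]_x (g x)%:E)%E.
Proof.
move=> mf mg f0 g0 c0 tail_fg.
pose X : {RV P >-> R} := mfun_Sub (mem_set mf).
pose Y : {RV P >-> R} := mfun_Sub (mem_set mg).
have -> : (\int[P]_x (f x)%:E = 'E_P[X])%E by rewrite expectation_def.
have -> : (\int[P]_x (g x)%:E = 'E_P[Y])%E by rewrite expectation_def.
rewrite !ge0_expectation_ccdf // -ge0_integralZl //; last first.
  exact: measurable_funS (ccdf_measurable Y).
apply: ge0_le_integral => //.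
- exact: measurable_funS (ccdf_measurable X).
- by apply: emeasurable_funM => //; exact: measurable_funS (ccdf_measurable Y).
- by move=> r; rewrite /= in_itv /= andbT; exact: tail_fg.
Qed.

Lemma Exp_sum (J : finType) (f : J -> T -> R) :
  (forall j, measurable_fun setT (f j)) -> (forall j x, 0 <= f j x) ->
  Exp P (fun x => \sum_(j : J) f j x) = (\sum_(j : J) Exp P (f j))%E.
Proof.
move=> mf f0; rewrite /Exp; under eq_integral => x _ do rewrite -sumEFin.
rewrite ge0_integral_sum // => [j|j x _]; last by rewrite lee_fin.
exact/measurable_realfun.measurable_EFinP.
Qed.

Lemma le_Exp_sum (J : finType) (f g : J -> T -> R) :
  (forall j x, 0 <= f j x) -> (forall j x, f j x <= g j x) ->
  (Exp P (fun x => \sum_(j : J) f j x)%R <= Exp P (fun x => \sum_(j : J) g j x)%R)%E.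
Proof.
move=> f0 fg; apply: ge0_le_integral_nomeas => x; rewrite lee_fin.
  exact: sumr_ge0.
exact: ler_sum.
Qed.

Lemma mutually_independent_pair {J : finType} {E : J -> set (set T)} :
  mutually_independent P E -> forall (s t : J) (A B : set T),
  (forall u, E u setT) -> s != t -> E s A -> E t B ->
  P (A `&` B) = (Prob P A * Prob P B)%:E.
Proof.
move=> indep s t A B ET st EA EB.
pose Aev u := if u == s then A else if u == t then B else setT.
have EAev u : E u (Aev u).
  by rewrite /Aev; case: eqP => [->|_] //; case: eqP => [->|_].
have ts : (t == s) = false by rewrite eq_sym (negbTE st).
have -> : A `&` B = \bigcap_(u in [set: J]) Aev u.
  apply/seteqP; split => [x [Ax Bx] u _ | x ABx].
    by rewrite /Aev; case: eqP => // _; case: eqP.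
  by split; [have := ABx s I | have := ABx t I]; rewrite /Aev ?ts eqxx.
rewrite (indep Aev EAev) (bigD1 s) // (bigD1 t) 1?eq_sym //= big1.
  by rewrite /Aev ts !eqxx mulr1.
by move=> u /andP[us ut]; rewrite /Aev (negbTE us) (negbTE ut) probability_setT.
Qed.

End probability_lemmas.

Section seller_kept_value.
Context {d} {T : measurableType d} {R : realType} (P : probability T R).
Variables (W : T -> R) (offered : T -> bool) (p : R).
Hypotheses (mW : measurable_fun setT W) (mO : measurable [set x | offered x]).

Let O := [set x | offered x].
Let entered := O `&` W @^-1` `]-oo, p].
Let kept x := W x * (~~ (offered x && (W x <= p)))%:R.

Let mentered : measurable entered.
Proof. by apply: measurableI => //; exact: measurable_preimage mW _ (measurable_itv _). Qed.

Lemma measurable_fun_kept : measurable_fun setT kept.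
Proof.
apply: measurable_realfun.measurable_funM => //.
have -> : (fun x => (~~ (offered x && (W x <= p)))%:R) = \1_(~` entered) :> (T -> R).
  apply/funext => x; rewrite indicE in_setC in_setI; congr (~~ (_ && _))%:R.
    by apply/idP/idP => [/mem_set|/set_mem].
  by apply/idP/idP => [|/set_mem]; rewrite ?inE /= in_itv.
exact/measurable_realfun.measurable_indic/measurableC.
Qed.

Lemma kept_preimage r : 0 <= r ->
  kept @^-1` `]r, +oo[ = W @^-1` `]r, +oo[ `\` entered.
Proof.
move=> r0; have entE x : entered x <-> offered x && (W x <= p).
  by rewrite /entered /O /= in_itv /=; split => [[-> ->]|/andP[-> ->]].
apply/seteqP; split => x /=; rewrite !in_itv /= !andbT /kept entE;
  case: (offered x && (W x <= p)); rewrite /= ?mulr0 ?mulr1 //.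
- by rewrite ltNge r0.
- by case.
- by case.
Qed.

Hypothesis indep : forall S, measurable S ->
  P (O `&` W @^-1` S) = (Prob P O * Prob P (W @^-1` S))%:E.
Hypothesis half : P (O `&` [set x | W x <= p]) = (2^-1)%:E.

Lemma Prob_tail_entered r :
  Prob P (W @^-1` `]r, +oo[ `&` entered) <= Prob P (W @^-1` `]r, +oo[) / 2.
Proof.
have half_itv : Prob P O * Prob P (W @^-1` `]-oo, p]) = 2^-1.
  by apply: EFin_inj; rewrite -indep // -half.
have -> : W @^-1` `]r, +oo[ `&` entered = O `&` W @^-1` `]r, p].
  apply/seteqP; split => x /=; rewrite !in_itv /= andbT.
    by case=> rW [Ox Wp]; rewrite rW.
  by case=> Ox /andP[rW Wp].
rewrite [X in X <= _]/Prob indep //=.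
apply: le_trans (ler_wpM2l (Prob_ge0 P O) (Prob_itv_le_mul P W r p mW)) _.
by rewrite mulrA half_itv mulrC.
Qed.

Lemma tail_le_kept_tail r : 0 <= r ->
  (P (W @^-1` `]r, +oo[) <= 2%:E * P (kept @^-1` `]r, +oo[))%E.
Proof.
move=> r0; have mtail := measurable_preimage mW _ (measurable_itv `]r, +oo[%R).
rewrite kept_preimage // !ProbE //; last exact: measurableD.
rewrite -EFinM lee_fin ProbD //.
have := Prob_tail_entered r; lra.
Qed.

Lemma integral_le_twice_kept : (forall x, 0 <= W x) ->
  (\int[P]_x (W x)%:E <= 2%:E * \int[P]_x (kept x)%:E)%E.
Proof.
move=> W0; apply: ge0_le_integral_ccdf => //.
- exact: measurable_fun_kept.
- by move=> x; apply: mulr_ge0.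
- exact: tail_le_kept_tail.
Qed.

End seller_kept_value.

Section market_independence.
Context {R : realType} {d} {Omega : measurableType d} (P : probability Omega R).
Context {n k : nat}.
Variables (v : 'I_n -> Omega -> valuation R k) (w : 'I_k -> Omega -> R)
  (offer : 'I_k -> Omega -> bool).

Definition market_events (t : 'I_n + 'I_k + 'I_k) : set (set Omega) :=
  match t with
  | inl (inl i) => events_val (v i)
  | inl (inr j) => events_rv (w j)
  | inr j => events_bool (offer j)
  end.

Lemma offer_value_independent : mutually_independent P market_events ->
  forall j S, measurable S -> P ([set om | offer j om] `&` w j @^-1` S) =
  (Prob P [set om | offer j om] * Prob P (w j @^-1` S))%:E.
Proof.
move=> indep j S mS; apply: (mutually_independent_pair P indep (inr j) (inl (inr j))) => //.
- by case=> [[i|j']|j']; [exists (fun _ => setT) | exists setT | exists setT];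
    rewrite ?preimage_setT //; split => //; apply/seteqP.
- by exists [set true].
- by exists S.
Qed.

End market_independence.

Local Close Scope classical_set_scope.

Theorem lemma1 (R : realType) (d : measure_display) (Omega : measurableType d)
  (P : probability Omega R) (n k : nat)
  (v : 'I_n -> Omega -> valuation R k)            (* buyers' random valuations *)
  (w : 'I_k -> Omega -> R)                  (* sellers' random values *)
  (a : valuation R k -> {set 'I_k} -> 'I_k -> R)  (* a(v,T,.) as item weights *)
  (A : ('I_n -> valuation R k) -> alloc n k)      (* the allocation algorithm *)
  (offer : 'I_k -> Omega -> bool)           (* mechanism's offer coins *)
  (pick : 'I_n -> Omega -> {set 'I_k} -> {set 'I_k}) (* buyers' choices *)
  (opt : Omega -> alloc n k)                (* welfare-maximizing allocation *)
  :
  let ESW := fun j => Exp P (fun om => SWB a A (fun i => v i om) j) in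
  let Ew := fun j => Exp P (w j) in
  let L := [set j : 'I_k | (4%:E * Ew j <= ESW j)%E] in
  let p := fun j => fine (ESW j) / 2 in
  let q := fun j => (2 * Prob P [set om | w j om <= p j]%classic)^-1 in
  (forall i S, measurable_fun setT (fun om => v i om S)) ->
  (forall j, measurable_fun setT (w j)) ->
  (forall j, measurable [set om | offer j om]%classic) ->
  (forall j om, 0 <= w j om) ->
  (forall i om, [/\ XOS (v i om), monotone_val (v i om) & normalized_val (v i om)]) ->
  (forall i om T, [/\ (forall j, 0 <= a (v i om) T j),
                     addfun (a (v i om) T) T = v i om T &
                     forall S, addfun (a (v i om) T) S <= v i om S]) ->
  mutually_independent P (fun t : 'I_n + 'I_k + 'I_k =>
    match t with
    | inl (inl i) => events_val (v i)
    | inl (inr j) => events_rv (w j)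
    | inr j => events_bool (offer j)
    end) ->
  (forall j, j \in L -> ESW j \is a fin_num) ->
  (forall j, j \in L -> P [set om | offer j om]%classic = (q j)%:E) ->
  (forall i om Lam, utility_maximizing (v i om) p Lam (pick i om Lam)) ->
  (forall om X, welfare (fun i => v i om) (fun j => w j om) X
                <= welfare (fun i => v i om) (fun j => w j om) (opt om)) ->
  (* hypothesis: every seller in L receives and accepts an offer w.p. exactly 1/2 *)
  (forall j, j \in L ->
     P ([set om | offer j om] `&` [set om | w j om <= p j])%classic = (2^-1)%:E) ->
  let ALG_S := Exp P (fun om => \sum_(j < k) w j om *
        (stays (fun i => pick i om) (Lambda1 L p (fun j => offer j om) (fun j => w j om)) j)%:R) in
  let OPT_S := Exp P (fun om => \sum_(j < k) w j om * (opt om j == None)%:R) in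
  ((\sum_(j < k) Ew j <= 2%:E * ALG_S)%E /\ (OPT_S <= \sum_(j < k) Ew j)%E).
Proof.
move=> ESW Ew L p _ _ mw mO w0 _ _ indep _ _ _ _ half ALG_S OPT_S.
split; last first.
  have -> : (\sum_(j < k) Ew j)%E = Exp P (fun om => \sum_(j < k) w j om).
    by rewrite Exp_sum.
  apply: le_Exp_sum => j om; first exact: mulr_ge0.
  by rewrite ler_piMr // lern1 leq_b1.
pose kept j om := w j om * (j \notin Lambda1 L p (offer^~ om) (w^~ om))%:R.
have kept_L j : j \in L ->
    kept j = fun om => w j om * (~~ (offer j om && (w j om <= p j)))%:R.
  by move=> jL; apply/funext => om; rewrite /kept /Lambda1 inE jL.
have kept_notL j : j \notin L -> kept j = w j.
  by move=> jL; apply/funext => om; rewrite /kept /Lambda1 inE (negbTE jL) mulr1.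
have mkept j : measurable_fun setT (kept j).
  have [jL|jL] := boolP (j \in L); last by rewrite kept_notL.
  by rewrite kept_L //; exact: measurable_fun_kept.
have Ew_le_kept j : (Ew j <= 2%:E * Exp P (kept j))%E.
  have [jL|jL] := boolP (j \in L); last first.
    rewrite kept_notL // lee_pemull ?lee_fin ?ler1n //.
    by rewrite integral_ge0 // => om _; rewrite lee_fin.
  rewrite kept_L //; apply: integral_le_twice_kept => //; last exact: half.
  exact: (offer_value_independent P v w offer indep).
apply: (@le_trans _ _ (\sum_(j < k) 2%:E * Exp P (kept j))%E); first exact: lee_sum.
rewrite -ge0_sume_distrr => [|j _]; last first.
  by rewrite integral_ge0 // => om _; rewrite lee_fin mulr_ge0.
rewrite -Exp_sum // => [|j om]; last exact: mulr_ge0.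
apply: lee_wpmul2l => //; apply: le_Exp_sum => j om; first exact: mulr_ge0.
by apply: ler_wpM2l => //; rewrite ler_nat /stays; case: (j \notin _).
Qed.
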